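(* Let $1/3<\kappa<\gamma<1/2$, assume hypothesis (H), let $I=[a,b]\subset[0,T]$, $\varepsilon=b-a$, $a_0\in\mathbb R^k$, $\tilde h\in\mathcal L_1(\mathbb R^k)$, and let $\tilde y\in\tilde{\mathcal Q}^\kappa_{\tilde h}(I;\mathbb R^k)$ with decomposition $\tilde\delta\tilde y=(\tilde x^1\zeta^{\tilde y})^*+\tilde r^{\tilde y}$. Set $y=a_0+\int_0^\infty\hat\phi(\xi)\tilde y(\xi)d\xi$. Then $y\in\mathcal A^\kappa_{f,h}(I;\mathbb R^k)$ with $$f_{ts}=\int_0^\infty\hat\phi(\xi)\,(e^{-\xi(t-s)}-1)e^{-\xi(s-a)}\tilde h(\xi)\,d\xi,\qquad h=a_0+\int_0^\infty\hat\phi(\xi)\tilde h(\xi)d\xi,$$ and $\mathcal M[y;\mathcal A^\kappa_{f,h}(I)]\le c_x\{\mathcal N[\tilde y;\tilde{\mathcal Q}^\kappa(I)]+\varepsilon^{1-\kappa}\mathcal N[\tilde h;\mathcal L_1]\}$.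
   Context: Measurable $\hat\phi:(0,\infty)\to\mathbb R$ and $T>0$ fixed. $\mathcal L_1(V)$: measurable $g:[0,\infty)\to V$ with $\mathcal N[g;\mathcal L_1]=\int_0^\infty|\hat\phi(\xi)|(1+\xi)\|g(\xi)\|d\xi<\infty$. $\tilde{\mathcal C}_k(I;V)$: continuous maps from $\{t_1\ge\dots\ge t_k\}\subset I^k$ to $\mathcal L_1(V)$. $(\tilde\delta f)_{ts}(\xi)=f_t(\xi)-e^{-\xi(t-s)}f_s(\xi)$, $(\tilde\delta B)_{tus}(\xi)=B_{ts}-B_{tu}-e^{-\xi(t-u)}B_{us}$. $\mathcal N[B;\tilde{\mathcal C}^\mu_2]=\sup_{s<t}\mathcal N[B_{ts};\mathcal L_1]/|t-s|^\mu$, $\mathcal N[f;\tilde{\mathcal C}^\mu_1]=\mathcal N[\tilde\delta f;\tilde{\mathcal C}^\mu_2]$; $\mathcal N[h;\tilde{\mathcal C}^\mu_3]=\inf\sum_i\sup_{s<u<t}\mathcal N[h^i_{tus};\mathcal L_1]|t-u|^{-\rho_i}|u-s|^{-(\mu-\rho_i)}$ over $h=\sum_ih^i$, $\rho_i\in(0,\mu)$. Paths: $\mathcal N[z;\mathcal C_1^0]=\sup\|z_s\|$, $\mathcal N[z;\mathcal C_1^\mu]=\sup_{s\ne t}\|z_t-z_s\|/|t-s|^\mu$, $\mathcal N[r;\mathcal C_2^\mu]=\sup_{s\ne t}\|r_{ts}\|/|t-s|^\mu$. Hypothesis (H): $\tilde x^1\in\tilde{\mathcal C}_2^\gamma([0,T];\mathbb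 R^{1,n})$, $\tilde x^2\in\tilde{\mathcal C}_2^{2\gamma}([0,T];\mathbb R^{n,n})$, $\tilde x^3\in\tilde{\mathcal C}_3^{3\gamma}([0,T];\mathbb R^{n,n})$, $\tilde\delta\tilde x^1=0$, $(\tilde\delta\tilde x^2)_{tus}=\tilde x^1_{tu}\otimes x^1_{us}+\tilde x^3_{tus}$ with $x^1_{ts}=\int_0^\infty\tilde x^1_{ts}(\xi)\hat\phi(\xi)d\xi$ and $(u\otimes v)_{ij}=u_iv_j$. $\tilde{\mathcal Q}^\kappa_{\tilde h}(I;\mathbb R^k)$: $\tilde y\in\tilde{\mathcal C}_1(I;\mathbb R^k)$ with $\tilde y_a=\tilde h$ and $(\tilde\delta\tilde y)_{ts}=(\tilde x^1_{ts}\zeta_s)^*+\tilde r_{ts}$, $\zeta\in\mathcal C_1^\kappa(I;\mathbb R^{n,k})$, $\tilde r\in\tilde{\mathcal C}^{2\kappa}_2$; $\mathcal N[\tilde y;\tilde{\mathcal Q}^\kappa]=\mathcal N[\tilde y;\tilde{\mathcal C}^\kappa_1]+\mathcal N[\zeta;\mathcal C_1^0]+\mathcal N[\zeta;\mathcal C_1^\kappa]+\mathcal N[\tilde r;\tilde{\mathcal C}^{2\kappa}_2]$. $\mathcal A^\kappa_{f,h}(I;\mathbb R^k)$ for $f$ with $\mathcal N[f;\mathcal C^1_2]<\infty$ and $h\in\mathbb R^k$: $\gamma$-Hölder paths $y$ with $y_a=h$ and $(\delta y)_{ts}-f_{ts}=(x^1_{ts}\zeta^y_s)^*+r^y_{ts}$,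 $\zeta^y\in\mathcal C_1^\kappa(I;\mathbb R^{n,k})$, $r^y\in\mathcal C_2^{2\kappa}(I;\mathbb R^k)$; $\mathcal M[y;\mathcal A^\kappa_{f,h}]=\mathcal N[\zeta^y;\mathcal C_1^0]+\mathcal N[\zeta^y;\mathcal C_1^\kappa]+\mathcal N[r^y;\mathcal C_2^{2\kappa}]+\mathcal N[y;\mathcal C_1^\kappa]$. *)

From HB Require Import structures.
From mathcomp Require Import all_boot all_order all_algebra.
From mathcomp Require Import all_classical all_reals all_analysis.
Set Implicit Arguments. Unset Strict Implicit. Unset Printing Implicit Defensive.
Import Order.TTheory GRing.Theory Num.Theory.
Import numFieldNormedType.Exports.
Local Open Scope classical_set_scope.
Local Open Scope ring_scope.

Section Defs.
Variable R : realType.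
Local Notation M m n := 'M[R]_(m, n).

Definition halfline : set R := [set xi | 0 <= xi].

(* ||.|| on R^{m,n}: the (max) norm of matrices from MathComp-Analysis *)

Definition L1norm (phi : R -> R) m n (g : R -> M m n) : \bar R :=
  (\int[@lebesgue_measure R]_(xi in halfline)
      (`|phi xi| * (1 + xi) * `|g xi|)%:E)%E.

Definition inL1 (phi : R -> R) m n (g : R -> M m n) : Prop :=
  (forall i j, measurable_fun halfline (fun xi => g xi i j)) /\
  (L1norm phi g < +oo)%E.

Definition phint (phi : R -> R) m n (g : R -> M m n) : M m n :=
  \matrix_(i, j) Rintegral (@lebesgue_measure R) halfline
                           (fun xi => phi xi * g xi i j).

Definition tdelta1 m n (f : R -> R -> M m n) (t s : R) : R -> M m n :=
  fun xi => f t xi - expR (- (xi * (t - s))) *: f s xi.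
Definition tdelta2 m n (B : R -> R -> R -> M m n) (t u s : R) : R -> M m n :=
  fun xi => B t s xi - B t u xi - expR (- (xi * (t - u))) *: B u s xi.

Definition tC1 (phi : R -> R) (a b : R) m n (f : R -> R -> M m n) : Prop :=
  (forall t, a <= t <= b -> inL1 phi (f t)) /\
  (forall t, a <= t <= b -> forall e : R, 0 < e -> exists2 d : R, 0 < d &
     forall t', a <= t' <= b -> `|t' - t| < d ->
       (L1norm phi (fun xi => (f t' xi - f t xi)%R) < e%:E)%E).

Definition tC2 (phi : R -> R) (a b : R) m n (B : R -> R -> R -> M m n) : Prop :=
  (forall t s, a <= s <= t -> t <= b -> inL1 phi (B t s)) /\
  (forall t s, a <= s <= t -> t <= b -> forall e : R, 0 < e ->
     exists2 d : R, 0 < d &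
     forall t' s', a <= s' <= t' -> t' <= b -> `|t' - t| < d -> `|s' - s| < d ->
       (L1norm phi (fun xi => (B t' s' xi - B t s xi)%R) < e%:E)%E).

Definition tC3 (phi : R -> R) (a b : R) m n (h : R -> R -> R -> R -> M m n)
  : Prop :=
  (forall t u s, a <= s <= u -> u <= t <= b -> inL1 phi (h t u s)) /\
  (forall t u s, a <= s <= u -> u <= t <= b -> forall e : R, 0 < e ->
     exists2 d : R, 0 < d &
     forall t' u' s', a <= s' <= u' -> u' <= t' <= b ->
       `|t' - t| < d -> `|u' - u| < d -> `|s' - s| < d ->
       (L1norm phi (fun xi => (h t' u' s' xi - h t u s xi)%R) < e%:E)%E).

Definition tN2 (phi : R -> R) (a b mu : R) m n (B : R -> R -> R -> M m n)
  : \bar R :=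
  ereal_sup [set z | exists t s, a <= s /\ s < t /\ t <= b /\
                     z = (L1norm phi (B t s) * ((t - s) `^ mu)^-1%:E)%E].

Definition tN1 (phi : R -> R) (a b mu : R) m n (f : R -> R -> M m n)
  : \bar R := tN2 phi a b mu (tdelta1 f).

Definition intC2mu (phi : R -> R) (a b mu : R) m n (B : R -> R -> R -> M m n)
  : Prop := tC2 phi a b B /\ (tN2 phi a b mu B < +oo)%E.

Definition supC3 (phi : R -> R) (a b mu : R) m n
  (g : R -> R -> R -> R -> M m n) (rho : R) : \bar R :=
  ereal_sup [set z | exists t u s, a <= s /\ s < u /\ u < t /\ t <= b /\
          z = (L1norm phi (g t u s) * ((t - u) `^ rho)^-1%:E
                 * ((u - s) `^ (mu - rho))^-1%:E)%E].

Definition intC3mu (phi : R -> R) (a b mu : R) m n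
  (h : R -> R -> R -> R -> M m n) : Prop :=
  tC3 phi a b h /\
  exists (p : nat) (hi : 'I_p -> R -> R -> R -> R -> M m n) (rho : 'I_p -> R),
    (forall i, 0 < rho i < mu) /\
    (forall t u s xi, a <= s <= u -> u <= t <= b -> 0 <= xi ->
        h t u s xi = \sum_(i < p) hi i t u s xi) /\
    (forall i t u s, a <= s <= u -> u <= t <= b -> forall k l,
        measurable_fun halfline (fun xi => hi i t u s xi k l)) /\
    (\sum_(i < p) supC3 phi a b mu (hi i) (rho i) < +oo)%E.

Definition N0 (a b : R) m n (z : R -> M m n) : \bar R :=
  ereal_sup [set z' | exists s, a <= s <= b /\ z' = (`|z s|)%:E].
Definition N1 (a b mu : R) m n (z : R -> M m n) : \bar R :=
  ereal_sup [set z' | exists t s, a <= s <= b /\ a <= t <= b /\ s != t /\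
                      z' = (`|z t - z s| / `|t - s| `^ mu)%:E].
Definition N2 (a b mu : R) m n (r : R -> R -> M m n) : \bar R :=
  ereal_sup [set z' | exists t s, a <= s /\ s < t /\ t <= b /\
                      z' = (`|r t s| / (t - s) `^ mu)%:E].

Definition hypH (phi : R -> R) (T gamma : R) (n : nat)
  (x1 : R -> R -> R -> M 1 n) (x2 : R -> R -> R -> M n n)
  (x3 : R -> R -> R -> R -> M n n) : Prop :=
  [/\ intC2mu phi 0 T gamma x1,
      intC2mu phi 0 T (2 * gamma) x2,
      intC3mu phi 0 T (3 * gamma) x3,
      (forall t u s xi, 0 <= s <= u -> u <= t <= T -> 0 <= xi ->
          tdelta2 x1 t u s xi = 0) &
      (forall t u s xi, 0 <= s <= u -> u <= t <= T -> 0 <= xi ->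
          tdelta2 x2 t u s xi
          = (x1 t u xi)^T *m phint phi (x1 u s) + x3 t u s xi)].

Definition inQ (phi : R -> R) (a b kappa : R) (n k : nat)
  (x1 : R -> R -> R -> M 1 n) (ht : R -> M k 1)
  (yt : R -> R -> M k 1) (zeta : R -> M n k) (rt : R -> R -> R -> M k 1)
  : Prop :=
  [/\ tC1 phi a b yt,
      (forall xi, 0 <= xi -> yt a xi = ht xi),
      (forall t s xi, a <= s <= t -> t <= b -> 0 <= xi ->
          tdelta1 yt t s xi = (x1 t s xi *m zeta s)^T + rt t s xi),
      (N1 a b kappa zeta < +oo)%E &
      intC2mu phi a b (2 * kappa) rt].

Definition NQ (phi : R -> R) (a b kappa : R) (n k : nat)
  (yt : R -> R -> M k 1) (zeta : R -> M n k) (rt : R -> R -> R -> M k 1)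
  : \bar R :=
  (tN1 phi a b kappa yt + N0 a b zeta + N1 a b kappa zeta
   + tN2 phi a b (2 * kappa) rt)%E.

(* y in A^kappa_{f,h}(I;R^k) with decomposition (zeta^y, r^y);
   x^1_ts = int phi x1tilde_ts *)
Definition inA (phi : R -> R) (a b gamma kappa : R) (n k : nat)
  (x1 : R -> R -> R -> M 1 n) (f : R -> R -> M k 1) (h : M k 1)
  (y : R -> M k 1) (zeta : R -> M n k) (r : R -> R -> M k 1) : Prop :=
  [/\ (N2 a b 1 f < +oo)%E,
      (N1 a b gamma y < +oo)%E,
      y a = h,
      (N1 a b kappa zeta < +oo)%E /\
      (N2 a b (2 * kappa) r < +oo)%E &
      (forall t s, a <= s <= t -> t <= b ->
          y t - y s - f t s = (phint phi (x1 t s) *m zeta s)^T + r t s)].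

Definition MA (a b kappa : R) (n k : nat)
  (y : R -> M k 1) (zeta : R -> M n k) (r : R -> R -> M k 1) : \bar R :=
  (N0 a b zeta + N1 a b kappa zeta + N2 a b (2 * kappa) r
   + N1 a b kappa y)%E.

End Defs.

(* Since [tdelta1 yt t s = yt t - e^{-xi(t-s)} yt s], the increment [yt t - yt s]
   is [(x1 t s zeta s)^T + rt t s] plus [(e^{-xi(t-s)} - 1) yt s], and expanding
   [yt s = e^{-xi(s-a)} ht + (x1 s a zeta a)^T + rt s a] splits this last term into
   the drift [f] (the [ht] part) and a remainder.  Integrating against [phi], the
   controlled decomposition of [y] keeps [zeta], and its remainder collects [rt t s]
   and [(e^{-xi(t-s)} - 1)((x1 s a zeta a)^T + rt s a)].  The elementary bound
   [|e^{-xi d} - 1| <= (1 + xi) d^theta] (theta <= 1), whose factor [1 + xi] is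
   absorbed by the weight of the [L_1] norm, gives [|f t s| <= (t - s) N[ht]] and a
   remainder of order [(t - s)^{2 kappa}]; the Hoelder bounds on [y] follow because
   [kappa < gamma <= 2 kappa <= 1]. *)

From HB Require Import structures.
From mathcomp Require Import all_boot all_order all_algebra.
From mathcomp Require Import all_classical all_reals all_analysis.
From mathcomp Require Import measurable_realfun ring lra.
Set Implicit Arguments. Unset Strict Implicit. Unset Printing Implicit Defensive.
Import Order.TTheory GRing.Theory Num.Theory.
Import numFieldNormedType.Exports.
Local Open Scope classical_set_scope.
Local Open Scope ring_scope.

Section mx_norm_max.
Variable R : realType.

Lemma mx_norm_entry_le m n (M : 'M[R]_(m, n)) i j : `|M i j| <= `|M|.
Proof.
rewrite [`|M|]mx_normrE.
exact: (le_bigmax _ (fun ij : 'I_m * 'I_n => `|M ij.1 ij.2|) (i, j)).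
Qed.

Lemma mx_norm_le_entries m n (M : 'M[R]_(m, n)) C :
  0 <= C -> (forall i j, `|M i j| <= C) -> `|M| <= C.
Proof. by move=> C0 MC; rewrite [`|M|]mx_normrE; apply: bigmax_le => // -[]. Qed.

Lemma mx_norm_tr m n (M : 'M[R]_(m, n)) : `|M^T| = `|M|.
Proof.
apply/le_anti/andP; split; apply: mx_norm_le_entries => // i j.
  by rewrite mxE mx_norm_entry_le.
have -> : M i j = M^T j i by rewrite mxE.
exact: mx_norm_entry_le.
Qed.

Lemma mx_norm_mul m n p (A : 'M[R]_(m, n)) (B : 'M[R]_(n, p)) :
  `|A *m B| <= n%:R * `|A| * `|B|.
Proof.
apply: mx_norm_le_entries => [|i j]; first by rewrite !mulr_ge0.
rewrite mxE; apply: le_trans (ler_norm_sum _ _ _) _.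
rewrite -mulrA mulr_natl -[n in _ *+ n]card_ord -sumr_const.
by apply: ler_sum => l _; rewrite normrM ler_pM ?mx_norm_entry_le.
Qed.

End mx_norm_max.

Section matrix_measurable.
Variable R : realType.
Implicit Type D : set R.

Definition mxmeasurable D m n (g : R -> 'M[R]_(m, n)) :=
  forall i j, measurable_fun D (fun x => g x i j).

Lemma measurable_mx_norm D m n (g : R -> 'M[R]_(m, n)) :
  measurable (D : set (measurableTypeR R)) ->
  mxmeasurable D g -> measurable_fun D (fun x => `|g x|).
Proof.
move=> mD mg; under eq_fun do rewrite [`|_|]mx_normrE.
elim: (index_enum _) => [|ij s IH].
  by under eq_fun do rewrite big_nil; exact: measurable_cst.
under eq_fun do rewrite big_cons.
by apply: measurable_maxr => //; apply: measurableT_comp.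
Qed.

Lemma mxmeasurableD D m n (g1 g2 : R -> 'M[R]_(m, n)) :
  mxmeasurable D g1 -> mxmeasurable D g2 -> mxmeasurable D (fun x => g1 x + g2 x).
Proof.
by move=> m1 m2 i j; under eq_fun do rewrite !mxE; exact: measurable_funD.
Qed.

Lemma mxmeasurableZ D m n (w : R -> R) (g : R -> 'M[R]_(m, n)) :
  measurable_fun D w -> mxmeasurable D g -> mxmeasurable D (fun x => w x *: g x).
Proof.
by move=> mw mg i j; under eq_fun do rewrite !mxE; exact: measurable_funM.
Qed.

Lemma mxmeasurable_mulmxr D m n p (g : R -> 'M[R]_(m, n)) (C : 'M[R]_(n, p)) :
  mxmeasurable D g -> mxmeasurable D (fun x => g x *m C).
Proof.
move=> mg i j; under eq_fun do rewrite mxE.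
by apply: measurable_sum => l; exact: measurable_funM.
Qed.

Lemma mxmeasurable_tr D m n (g : R -> 'M[R]_(m, n)) :
  mxmeasurable D g -> mxmeasurable D (fun x => (g x)^T).
Proof. by move=> mg i j; under eq_fun do rewrite !mxE; exact: mg. Qed.

End matrix_measurable.

Section halfline.
Variable R : realType.
Local Notation mu := (@lebesgue_measure R).
Local Notation H := (@halfline R).

(* Without the ascription, [measurable H] elaborates in the measurable
   structure of [R.-ocitv], not in the one [lebesgue_measure] lives on. *)
Lemma measurable_halfline : measurable (H : set (measurableTypeR R)).
Proof.
rewrite (_ : H = `[0%R, +oo[%classic); first exact: measurable_itv.
by apply/seteqP; split => x /=; rewrite in_itv /= andbT.
Qed.

Lemma measurable_fun_halfline (f : R -> R) :
  measurable_fun [set xi : R | 0 < xi] f -> measurable_fun H f.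
Proof.
move=> mf; rewrite (_ : H = [set 0] `|` [set xi | 0 < xi]); last first.
  apply/seteqP; split => x /=; rewrite /halfline /=.
    by rewrite le_eqVlt => /orP[/eqP->|]; [left|right].
  by case=> [->//|/ltW].
apply/measurable_funU => //; last by split => //; exact: measurable_fun_set1.
rewrite (_ : [set xi | 0 < xi] = `]0, +oo[%classic); first exact: measurable_itv.
by apply/seteqP; split => x /=; rewrite in_itv /= andbT.
Qed.

Lemma Rintegral_sum (I : Type) (s : seq I) (f : I -> R -> R) :
  (forall i, mu.-integrable H (EFin \o f i)) ->
  Rintegral mu H (fun x => \sum_(i <- s) f i x) = \sum_(i <- s) Rintegral mu H (f i).
Proof.
move=> intf; have mH := measurable_halfline; elim: s => [|i s IH].
  by under eq_Rintegral do rewrite big_nil; rewrite big_nil Rintegral_cst ?mul0r.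
under eq_Rintegral do rewrite big_cons.
rewrite big_cons RintegralD ?IH //.
apply: eq_integrable mH _ _ _ (integrable_sum mH s (P := xpredT) (fun i _ => intf i)).
by move=> x _ /=; rewrite sumEFin.
Qed.

End halfline.

Section weighted_integral.
Variables (R : realType) (phi : R -> R).
Local Notation mu := (@lebesgue_measure R).
Local Notation H := (@halfline R).

Definition weighted_integral (v : R -> R) : \bar R :=
  (\int[mu]_(xi in H) (`|phi xi| * v xi)%:E)%E.

Lemma L1normE m n (g : R -> 'M[R]_(m, n)) :
  L1norm phi g = weighted_integral (fun xi => (1 + xi) * `|g xi|).
Proof. by apply: eq_integral => xi _; rewrite mulrA. Qed.

Lemma L1norm_ge0 m n (g : R -> 'M[R]_(m, n)) : (0 <= L1norm phi g)%E.
Proof. by apply: integral_ge0 => xi xi0; rewrite lee_fin !mulr_ge0 ?addr_ge0. Qed.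

Lemma L1norm_eq0 m n (g : R -> 'M[R]_(m, n)) :
  (forall xi, 0 <= xi -> g xi = 0) -> L1norm phi g = 0%E.
Proof.
move=> g0; rewrite /L1norm (eq_integral (cst 0%E)) ?integral0// => xi.
by rewrite inE => /g0 ->; rewrite normr0 mulr0.
Qed.

Hypothesis mphi : measurable_fun H phi.

Let measurable_weight (u : R -> R) : measurable_fun H u ->
  measurable_fun H (fun xi => (`|phi xi| * u xi)%:E).
Proof.
by move=> mu_; apply/measurable_EFinP/measurable_funM => //; exact: measurableT_comp.
Qed.

Section nonnegative.
Variables v w : R -> R.
Hypotheses (mv : measurable_fun H v) (mw : measurable_fun H w).
Hypotheses (v0 : forall xi, H xi -> 0 <= v xi) (w0 : forall xi, H xi -> 0 <= w xi).

Lemma weighted_integral_ge0 : (0 <= weighted_integral v)%E.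
Proof. by apply: integral_ge0 => xi Hxi; rewrite lee_fin mulr_ge0 ?v0. Qed.

Lemma weighted_integralD :
  weighted_integral (fun xi => v xi + w xi)
  = (weighted_integral v + weighted_integral w)%E.
Proof.
rewrite /weighted_integral -ge0_integralD //.
- by apply: eq_integral => xi _; rewrite mulrDr EFinD.
- exact: measurable_halfline.
- by move=> xi Hxi; rewrite lee_fin mulr_ge0 ?v0.
- exact: measurable_weight.
- by move=> xi Hxi; rewrite lee_fin mulr_ge0 ?w0.
- exact: measurable_weight.
Qed.

Lemma weighted_integralZl (c : R) : 0 <= c ->
  weighted_integral (fun xi => c * v xi) = (c%:E * weighted_integral v)%E.
Proof.
move=> c0; rewrite /weighted_integral -ge0_integralZl_EFin //.
- by apply: eq_integral => xi _; rewrite -EFinM mulrCA.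
- exact: measurable_halfline.
- by move=> xi Hxi; rewrite lee_fin mulr_ge0 ?v0.
- exact: measurable_weight.
Qed.

Lemma integrable_weighted (u : R -> R) : measurable_fun H u ->
  (forall xi, H xi -> `|u xi| <= v xi) -> (weighted_integral v < +oo)%E ->
  mu.-integrable H (EFin \o (fun xi => phi xi * u xi)).
Proof.
move=> mu_ uv vfin; have mphiu : measurable_fun H (fun xi => phi xi * u xi).
  exact: measurable_funM.
apply/integrableP; split; first exact/measurable_EFinP.
apply: le_lt_trans vfin; apply: ge0_le_integral => //.
- exact: measurable_halfline.
- by apply/measurable_EFinP; exact: measurableT_comp.
- exact: measurable_weight.
- by move=> xi Hxi; rewrite lee_fin normrM ler_wpM2l ?uv.
Qed.

Lemma norm_Rintegral_le_weighted (u : R -> R) : measurable_fun H u ->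
  (forall xi, H xi -> `|u xi| <= v xi) ->
  ((`|Rintegral mu H (fun xi => phi xi * u xi)|)%:E <= weighted_integral v)%E.
Proof.
move=> mu_ uv; have [vfin|] := ltP (weighted_integral v) +oo%E; last first.
  by rewrite leye_eq => /eqP ->; exact: leey.
have iu := integrable_weighted mu_ uv vfin.
have vfin' : weighted_integral v \is a fin_num.
  by rewrite ge0_fin_numE ?weighted_integral_ge0.
have le_abs : (\int[mu]_(xi in H) (`|phi xi * u xi|)%:E <= weighted_integral v)%E.
  apply: ge0_le_integral => //.
  - exact: measurable_halfline.
  - by apply/measurable_EFinP; apply: measurableT_comp => //; exact: measurable_funM.
  - exact: measurable_weight.
  - by move=> xi Hxi; rewrite lee_fin normrM ler_wpM2l ?uv.
rewrite -(fineK vfin') lee_fin.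
apply: le_trans (le_normr_Rintegral _ iu) _; first exact: measurable_halfline.
apply: fine_le => //; rewrite ge0_fin_numE ?(le_lt_trans le_abs)//.
by apply: integral_ge0 => xi _; rewrite lee_fin.
Qed.

End nonnegative.
End weighted_integral.

Section phi_integral.
Variables (R : realType) (phi : R -> R).
Local Notation mu := (@lebesgue_measure R).
Local Notation H := (@halfline R).
Hypothesis mphi : measurable_fun H phi.

Definition phintegrable m n (g : R -> 'M[R]_(m, n)) :=
  forall i j, mu.-integrable H (EFin \o (fun xi => phi xi * g xi i j)).

Lemma phintegrable_le m n (g : R -> 'M[R]_(m, n)) (v : R -> R) :
  mxmeasurable H g -> measurable_fun H v -> (forall xi, H xi -> `|g xi| <= v xi) ->
  (weighted_integral phi v < +oo)%E -> phintegrable g.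
Proof.
move=> mg mv gv vfin i j; apply: (integrable_weighted mphi mv (mg i j) _ vfin).
by move=> xi Hxi; apply: le_trans (gv xi Hxi); exact: mx_norm_entry_le.
Qed.

Lemma measurable_L1weight m n (g : R -> 'M[R]_(m, n)) : mxmeasurable H g ->
  measurable_fun H (fun xi => (1 + xi) * `|g xi|).
Proof.
move=> mg; apply: measurable_funM; first exact: measurable_funD.
exact: measurable_mx_norm (@measurable_halfline R) mg.
Qed.

Lemma L1weight_ge0 m n (g : R -> 'M[R]_(m, n)) xi : H xi -> 0 <= (1 + xi) * `|g xi|.
Proof. by move=> xi0; rewrite mulr_ge0 ?addr_ge0. Qed.

Lemma L1weight_ge m n (g : R -> 'M[R]_(m, n)) xi : H xi -> `|g xi| <= (1 + xi) * `|g xi|.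
Proof. by move=> xi0; rewrite ler_peMl // lerDl. Qed.

Lemma inL1_phintegrable m n (g : R -> 'M[R]_(m, n)) : inL1 phi g -> phintegrable g.
Proof.
move=> [mg gfin]; apply: (phintegrable_le mg (measurable_L1weight mg)).
  exact: L1weight_ge.
by rewrite -L1normE.
Qed.

Lemma phintegrableB m n (g1 g2 : R -> 'M[R]_(m, n)) :
  phintegrable g1 -> phintegrable g2 -> phintegrable (fun xi => g1 xi - g2 xi).
Proof.
move=> i1 i2 i j; have mH := @measurable_halfline R.
apply: eq_integrable mH _ _ _ (integrableB mH (i1 i j) (i2 i j)).
by move=> x _ /=; rewrite !mxE mulrBr EFinB.
Qed.

Lemma phintegrable_mulmxr m n p (g : R -> 'M[R]_(m, n)) (C : 'M[R]_(n, p)) :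
  phintegrable g -> phintegrable (fun xi => g xi *m C).
Proof.
move=> ig i j; have mH := @measurable_halfline R.
have il l := integrableZr mH (C l j) (ig i l).
have isum := integrable_sum mH (index_enum _) (P := xpredT) (fun l _ => il l).
apply: eq_integrable mH _ _ _ isum.
move=> x _ /=; rewrite mxE mulr_sumr sumEFin; congr (_%:E).
by apply: eq_bigr => l _; rewrite mulrA.
Qed.

Lemma phintegrable_tr m n (g : R -> 'M[R]_(m, n)) :
  phintegrable g -> phintegrable (fun xi => (g xi)^T).
Proof. by move=> ig i j; under eq_fun do rewrite mxE; exact: ig. Qed.

Lemma eq_phint m n (g1 g2 : R -> 'M[R]_(m, n)) :
  (forall xi, H xi -> g1 xi = g2 xi) -> phint phi g1 = phint phi g2.
Proof.
move=> g12; apply/matrixP => i j; rewrite !mxE.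
by apply: eq_Rintegral => xi; rewrite inE => /g12 ->.
Qed.

Lemma phintB m n (g1 g2 : R -> 'M[R]_(m, n)) : phintegrable g1 -> phintegrable g2 ->
  phint phi (fun xi => g1 xi - g2 xi) = phint phi g1 - phint phi g2.
Proof.
move=> i1 i2; apply/matrixP => i j; rewrite !mxE -RintegralB //.
  by apply: eq_Rintegral => xi _; rewrite !mxE mulrBr.
exact: measurable_halfline.
Qed.

Lemma phint_mulmxr m n p (g : R -> 'M[R]_(m, n)) (C : 'M[R]_(n, p)) :
  phintegrable g -> phint phi (fun xi => g xi *m C) = phint phi g *m C.
Proof.
move=> ig; have mH := @measurable_halfline R; apply/matrixP => i j; rewrite !mxE.
under eq_bigr do rewrite mxE -RintegralZr //.
rewrite -Rintegral_sum; first by apply: eq_Rintegral => xi _; rewrite mxE mulr_sumr;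
  apply: eq_bigr => l _; rewrite mulrA.
move=> l; apply: eq_integrable mH _ _ _ (integrableZr mH _ (ig i l)).
by move=> x _ /=; rewrite EFinM.
Qed.

Lemma phint_tr m n (g : R -> 'M[R]_(m, n)) :
  phint phi (fun xi => (g xi)^T) = (phint phi g)^T.
Proof.
by apply/matrixP => i j; rewrite !mxE; apply: eq_Rintegral => xi _; rewrite mxE.
Qed.

Lemma norm_phint_le m n (g : R -> 'M[R]_(m, n)) (v : R -> R) :
  mxmeasurable H g -> measurable_fun H v -> (forall xi, H xi -> `|g xi| <= v xi) ->
  ((`|phint phi g|)%:E <= weighted_integral phi v)%E.
Proof.
move=> mg mv gv; have v0 xi : H xi -> 0 <= v xi by move/gv; exact: le_trans.
have [vfin|] := ltP (weighted_integral phi v) +oo%E; last first.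
  by rewrite leye_eq => /eqP ->; exact: leey.
have vfin' : weighted_integral phi v \is a fin_num.
  by rewrite ge0_fin_numE ?weighted_integral_ge0.
rewrite -(fineK vfin') lee_fin; apply: mx_norm_le_entries => [|i j].
  by rewrite fine_ge0 ?weighted_integral_ge0.
rewrite -lee_fin fineK // mxE; apply: norm_Rintegral_le_weighted => // xi Hxi.
by apply: le_trans (gv xi Hxi); exact: mx_norm_entry_le.
Qed.

Lemma norm_phint_le_L1norm m n (g : R -> 'M[R]_(m, n)) :
  mxmeasurable H g -> ((`|phint phi g|)%:E <= L1norm phi g)%E.
Proof.
move=> mg; rewrite L1normE; apply: norm_phint_le => //.
  exact: measurable_L1weight.
exact: L1weight_ge.
Qed.

End phi_integral.

Section real_estimates.
Variable R : realType.

Lemma powR_le1D (x p : R) : 0 <= x -> 0 <= p <= 1 -> x `^ p <= 1 + x.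
Proof.
move=> x0 /andP[p0 p1]; have [x1|x1] := leP x 1.
  apply: (@le_trans _ _ 1); last by rewrite lerDl.
  by have := @ge0_ler_powR R p p0 x 1; rewrite powR1 => ->; rewrite ?nnegrE.
by apply: (@le_trans _ _ x); [exact: ler1_powR (ltW x1) p1 | rewrite lerDr].
Qed.

Lemma norm_expRN_sub1_le (x p : R) : 0 <= x -> 0 < p <= 1 ->
  `|expR (- x) - 1| <= x `^ p.
Proof.
move=> x0 /andP[p0 p1].
rewrite ler0_norm ?subr_le0 ?expR_le1 ?oppr_le0// opprB.
have [x1|x1] := leP x 1.
  have [->|xn0] := eqVneq x 0; first by rewrite oppr0 expR0 subrr powR_ge0.
  apply: le_trans (ger1_powR _ _) => //; last by rewrite lt0r xn0 x0.
  by have := expR_ge1Dx (- x); lra.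
apply: (@le_trans _ _ 1); first by rewrite lerBlDr lerDl expR_ge0.
have := @ge0_ler_powR R p (ltW p0) 1 x; rewrite powR1 => -> //.
- by rewrite nnegrE.
- exact: ltW.
Qed.

Lemma norm_expRN_sub1_le_weight (xi d p : R) : 0 <= xi -> 0 <= d -> 0 < p <= 1 ->
  `|expR (- (xi * d)) - 1| <= (1 + xi) * d `^ p.
Proof.
move=> xi0 d0 p01; apply: le_trans (norm_expRN_sub1_le (mulr_ge0 xi0 d0) p01) _.
case/andP: p01 => p0 p1.
by rewrite powRM// ler_wpM2r ?powR_ge0// powR_le1D// ltW.
Qed.

Lemma powR_split (d e p q : R) : 0 < d -> d <= e -> 0 <= p <= q ->
  d `^ q <= d `^ p * e `^ (q - p).
Proof.
move=> d0 de /andP[p0 pq].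
have -> : d `^ q = d `^ p * d `^ (q - p).
  by rewrite -powRD ?subrKC //; apply/implyP => _; rewrite gt_eqF.
rewrite ler_wpM2l ?powR_ge0//; apply: ge0_ler_powR => //.
- by rewrite subr_ge0.
- by rewrite nnegrE ltW.
- by rewrite nnegrE (le_trans (ltW d0)).
Qed.

End real_estimates.

Section path_norms.
Variables (R : realType) (a b : R).
Hypothesis ab : a < b.

Lemma tN2_ge0 (phi : R -> R) mu m n (B : R -> R -> R -> 'M[R]_(m, n)) :
  (0 <= tN2 phi a b mu B)%E.
Proof.
apply: le_trans (ereal_sup_ubound _); last first.
  exists b, a; split; [exact: lexx | split; [exact: ab | split; [exact: lexx|]]].
  reflexivity.
by rewrite mule_ge0 ?L1norm_ge0// lee_fin invr_ge0 powR_ge0.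
Qed.

Lemma N0_ge0 m n (z : R -> 'M[R]_(m, n)) : (0 <= N0 a b z)%E.
Proof.
apply: le_trans (ereal_sup_ubound _); last first.
  by exists a; split; [rewrite lexx ltW| reflexivity].
by rewrite lee_fin.
Qed.

Lemma N1_ge0 mu m n (z : R -> 'M[R]_(m, n)) : (0 <= N1 a b mu z)%E.
Proof.
apply: le_trans (ereal_sup_ubound _); last first.
  exists b, a; split; [by rewrite lexx ltW | split; [by rewrite lexx ltW | split]].
    by rewrite (lt_eqF ab).
  reflexivity.
by rewrite lee_fin divr_ge0 ?powR_ge0.
Qed.

Lemma L1norm_le_tN2 (phi : R -> R) mu m n (B : R -> R -> R -> 'M[R]_(m, n)) s t :
  a <= s -> s < t -> t <= b -> (L1norm phi (B t s) < +oo)%E ->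
  (tN2 phi a b mu B < +oo)%E ->
  (L1norm phi (B t s) <= (fine (tN2 phi a b mu B) * (t - s) `^ mu)%:E)%E.
Proof.
move=> sa st tb Lfin Nfin.
have Nfin' : tN2 phi a b mu B \is a fin_num by rewrite ge0_fin_numE ?tN2_ge0.
have Lfin' : L1norm phi (B t s) \is a fin_num by rewrite ge0_fin_numE ?L1norm_ge0.
have ts0 : 0 < (t - s) `^ mu by rewrite powR_gt0 ?subr_gt0.
have : (L1norm phi (B t s) * ((t - s) `^ mu)^-1%:E <= tN2 phi a b mu B)%E.
  by apply: ereal_sup_ubound; exists t, s.
by rewrite -(fineK Lfin') -(fineK Nfin') -EFinM !lee_fin ler_pdivrMr.
Qed.

Lemma norm_le_N0 m n (z : R -> 'M[R]_(m, n)) s :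
  a <= s <= b -> (N0 a b z < +oo)%E -> `|z s| <= fine (N0 a b z).
Proof.
move=> sI Nfin; have Nfin' : N0 a b z \is a fin_num by rewrite ge0_fin_numE ?N0_ge0.
by rewrite -lee_fin fineK//; apply: ereal_sup_ubound; exists s.
Qed.

Lemma norm_sub_le_N1 mu m n (z : R -> 'M[R]_(m, n)) s t :
  a <= s <= b -> a <= t <= b -> (N1 a b mu z < +oo)%E ->
  `|z t - z s| <= fine (N1 a b mu z) * `|t - s| `^ mu.
Proof.
move=> sI tI Nfin; have [->|st] := eqVneq s t.
  by rewrite subrr normr0 mulr_ge0 ?powR_ge0 ?fine_ge0 ?N1_ge0.
have Nfin' : N1 a b mu z \is a fin_num by rewrite ge0_fin_numE ?N1_ge0.
have ts0 : 0 < `|t - s| `^ mu by rewrite powR_gt0 ?normr_gt0 ?subr_eq0 1?eq_sym.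
rewrite -ler_pdivrMr// -lee_fin fineK//.
by apply: ereal_sup_ubound; exists t, s.
Qed.

Lemma N0_lt_pinfty mu m n (z : R -> 'M[R]_(m, n)) : 0 <= mu ->
  (N1 a b mu z < +oo)%E -> (N0 a b z < +oo)%E.
Proof.
move=> mu0 Nfin.
apply: (@le_lt_trans _ _ (`|z a| + fine (N1 a b mu z) * (b - a) `^ mu)%:E).
  apply: ge_ereal_sup => _ [s [sI ->]]; rewrite lee_fin.
  rewrite -[z s](subrK (z a)) (le_trans (ler_normD _ _)) // addrC lerD2l.
  apply: le_trans (norm_sub_le_N1 _ sI Nfin) _; first by rewrite lexx ltW.
  rewrite ler_wpM2l ?fine_ge0 ?N1_ge0//; case/andP: sI => ? ?.
  apply: ge0_ler_powR => //; rewrite ?nnegrE ?subr_ge0 ?(ltW ab)//.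
  by rewrite ger0_norm ?subr_ge0 // lerB.
exact: ltey.
Qed.

Lemma N1_le mu m n (z : R -> 'M[R]_(m, n)) (C : R) :
  (forall s t, a <= s -> s < t -> t <= b -> `|z t - z s| <= C * (t - s) `^ mu) ->
  (N1 a b mu z <= C%:E)%E.
Proof.
move=> zC; apply: ge_ereal_sup => _ [t [s [/andP[sa sb] [/andP[ta tb] [st ->]]]]].
have ts0 : 0 < `|t - s| `^ mu by rewrite powR_gt0 ?normr_gt0 ?subr_eq0 1?eq_sym.
rewrite lee_fin ler_pdivrMr//; have [lst|lts|] := ltgtP s t.
- by rewrite gtr0_norm ?subr_gt0 ?zC.
- by rewrite distrC [`|t - s|]distrC gtr0_norm ?subr_gt0 ?zC.
- by move/eqP; rewrite (negPf st).
Qed.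

Lemma N2_le mu m n (r : R -> R -> 'M[R]_(m, n)) (C : R) :
  (forall s t, a <= s -> s < t -> t <= b -> `|r t s| <= C * (t - s) `^ mu) ->
  (N2 a b mu r <= C%:E)%E.
Proof.
move=> rC; apply: ge_ereal_sup => _ [t [s [sa [st [tb ->]]]]].
by rewrite lee_fin ler_pdivrMr ?powR_gt0 ?subr_gt0 ?rC.
Qed.

End path_norms.

Lemma measurable_expRN_scaled (R : realType) (D : set R) (c : R) :
  measurable_fun D (fun x => expR (- (x * c))).
Proof.
apply: measurableT_comp; first exact: measurable_expR.
by apply: measurable_funN; apply: measurable_funM => //; exact: measurable_id.
Qed.

Definition controlled_constant (R : realType) (n : nat) (X kappa gamma e : R) :=
  (1 + n%:R * X * (e `^ (gamma - kappa) + e `^ gamma))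
  * (1 + e `^ kappa) * (1 + e `^ (2 * kappa)).

Lemma controlled_constant_ge (R : realType) n (X kappa gamma e : R) : 0 <= X ->
  [/\ 1 <= controlled_constant n X kappa gamma e,
      (1 + e `^ kappa) * (1 + e `^ (2 * kappa)) <= controlled_constant n X kappa gamma e &
      1 + n%:R * X * e `^ gamma * (1 + e `^ kappa) + n%:R * X * e `^ (gamma - kappa)
      <= controlled_constant n X kappa gamma e].
Proof.
move=> X0; have eg := powR_ge0 e gamma; have ek := powR_ge0 e kappa.
have ek2 := powR_ge0 e (2 * kappa); have egk := powR_ge0 e (gamma - kappa).
have nX : 0 <= n%:R * X by rewrite mulr_ge0.
have ek1 : 0 <= 1 + e `^ kappa by rewrite addr_ge0.
have ek21 : 0 <= 1 + e `^ (2 * kappa) by rewrite addr_ge0.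
have nXe : 0 <= n%:R * X * (e `^ (gamma - kappa) + e `^ gamma).
  by rewrite mulr_ge0 ?addr_ge0.
have c_Rv : (1 + e `^ kappa) * (1 + e `^ (2 * kappa))
    <= controlled_constant n X kappa gamma e.
  by have := mulr_ge0 (mulr_ge0 nXe ek1) ek21; rewrite /controlled_constant; lra.
split=> //; first by apply: le_trans c_Rv; have := mulr_ge0 ek ek2; lra.
have e2k1 : 1 <= 1 + e `^ (2 * kappa) by rewrite lerDl.
have := ler_peMr (mulr_ge0 (addr_ge0 ler01 nXe) ek1) e2k1.
by have := mulr_ge0 (mulr_ge0 nX egk) ek; rewrite /controlled_constant; lra.
Qed.

Lemma controlled_constant_le (R : realType) n (X kappa gamma e T : R) :
  0 <= X -> 0 < kappa -> kappa < gamma -> 0 <= e <= T ->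
  0 <= controlled_constant n X kappa gamma e <= controlled_constant n X kappa gamma T.
Proof.
move=> X0 k0 kg /andP[e0 eT]; have T0 := le_trans e0 eT.
have mono p : 0 <= p -> 0 <= e `^ p <= T `^ p.
  by move=> p0; rewrite powR_ge0 ge0_ler_powR ?nnegrE.
have /andP[ek0 ekT] := mono kappa (ltW k0).
have /andP[eg0 egT] := mono gamma (ltW (lt_trans k0 kg)).
have k2 : 0 <= 2 * kappa by lra.
have gk : 0 <= gamma - kappa by lra.
have /andP[e2k0 e2kT] := mono _ k2; have /andP[egk0 egkT] := mono _ gk.
have nX : 0 <= n%:R * X by rewrite mulr_ge0.
have f1a := addr_ge0 ler01 (mulr_ge0 nX (addr_ge0 egk0 eg0)).
have f1b := lerD (lexx 1) (ler_wpM2l nX (lerD egkT egT)).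
have [f2a f2b] := (addr_ge0 ler01 ek0, lerD (lexx 1) ekT).
have [f3a f3b] := (addr_ge0 ler01 e2k0, lerD (lexx 1) e2kT).
rewrite /controlled_constant mulr_ge0 ?mulr_ge0//=.
exact: ler_pM (mulr_ge0 f1a f2a) f3a (ler_pM f1a f2a f1b f2b) f3b.
Qed.

Section integrated_controlled_path.
Variables (R : realType) (phi : R -> R) (n k : nat) (a b kappa gamma X : R).
Variables (x1 : R -> R -> R -> 'M[R]_(1, n)) (a0 : 'M[R]_(k, 1)).
Variables (ht : R -> 'M[R]_(k, 1)) (yt : R -> R -> 'M[R]_(k, 1)).
Variables (zeta : R -> 'M[R]_(n, k)) (rt : R -> R -> R -> 'M[R]_(k, 1)).
Local Notation H := (@halfline R).
Hypotheses (mphi : measurable_fun H phi) (ab : a < b).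
Hypotheses (kappa_gt0 : 0 < kappa) (kappa_gamma : kappa < gamma).
Hypotheses (gamma_2kappa : gamma <= 2 * kappa) (two_kappa_le1 : 2 * kappa <= 1).
Hypotheses (ht_L1 : inL1 phi ht) (yQ : inQ phi a b kappa x1 ht yt zeta rt).
Hypothesis x1_L1 : forall t s, a <= s <= t -> t <= b -> inL1 phi (x1 t s).
Hypothesis x1_diag : forall t (xi : R), a <= t <= b -> 0 <= xi -> x1 t t xi = 0.
Hypothesis X_ge0 : 0 <= X.
Hypothesis x1_holder : forall t s, a <= s <= t -> t <= b ->
  (L1norm phi (x1 t s) <= (X * (t - s) `^ gamma)%:E)%E.

Local Notation Z0 := (fine (N0 a b zeta)).
Local Notation Z1 := (fine (N1 a b kappa zeta)).
Local Notation Rv := (fine (tN2 phi a b (2 * kappa) rt)).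
Local Notation Lh := (fine (L1norm phi ht)).
Local Notation Cr :=
  (Rv * (1 + (b - a) `^ (2 * kappa)) + n%:R * X * Z0 * (b - a) `^ gamma).

Local Notation drift t s := (fun xi : R =>
  (expR (- (xi * (t - s))) - 1) * expR (- (xi * (s - a))) *: ht xi).
Local Notation rem_integrand t s := (fun xi : R =>
  rt t s xi + (expR (- (xi * (t - s))) - 1) *: ((x1 s a xi *m zeta a)^T + rt s a xi)).
Local Notation rem_weight t s := (fun xi : R =>
  (1 + xi) * `|rt t s xi| + (t - s) `^ (2 * kappa) *
    (n%:R * Z0 * ((1 + xi) * `|x1 s a xi|) + (1 + xi) * `|rt s a xi|)).

Definition ypath t := a0 + phint phi (yt t).
Definition fdrift t s := phint phi (drift t s).
Definition yrem t s :=
  ypath t - ypath s - fdrift t s - (phint phi (x1 t s) *m zeta s)^T.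

Let gamma_gt0 : 0 < gamma. Proof. exact: lt_trans kappa_gt0 kappa_gamma. Qed.
Let two_kappa_gt0 : 0 < 2 * kappa. Proof. by rewrite mulr_gt0. Qed.

Let yt_L1 t : a <= t <= b -> inL1 phi (yt t).
Proof. by case: yQ => -[+ _] _ _ _ _; apply. Qed.

Let yt_init (xi : R) : 0 <= xi -> yt a xi = ht xi.
Proof. by case: yQ => _ + _ _ _; apply. Qed.

Let yt_increment t s (xi : R) : a <= s <= t -> t <= b -> 0 <= xi ->
  yt t xi = expR (- (xi * (t - s))) *: yt s xi + (x1 t s xi *m zeta s)^T + rt t s xi.
Proof.
case: yQ => _ _ + _ _ => dec st tb xi0; move: (dec t s xi st tb xi0).
by rewrite /tdelta1 => /eqP; rewrite subr_eq => /eqP ->; rewrite addrC addrA.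
Qed.

Let zeta_N1 : (N1 a b kappa zeta < +oo)%E.
Proof. by case: yQ. Qed.

Let rt_L1 t s : a <= s <= t -> t <= b -> inL1 phi (rt t s).
Proof. by case: yQ => _ _ _ _ [[+ _] _]; apply. Qed.

Let rt_tN2 : (tN2 phi a b (2 * kappa) rt < +oo)%E.
Proof. by case: yQ => _ _ _ _ []. Qed.

Let Lh_E : L1norm phi ht = Lh%:E.
Proof. by rewrite fineK// ge0_fin_numE ?L1norm_ge0//; case: ht_L1. Qed.

Let Lh_ge0 : 0 <= Lh. Proof. by rewrite fine_ge0 ?L1norm_ge0. Qed.
Let Z0_ge0 : 0 <= Z0. Proof. by rewrite fine_ge0 ?N0_ge0. Qed.
Let Z1_ge0 : 0 <= Z1. Proof. by rewrite fine_ge0 ?N1_ge0. Qed.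
Let Rv_ge0 : 0 <= Rv. Proof. by rewrite fine_ge0 ?tN2_ge0. Qed.
Let Cr_ge0 : 0 <= Cr. Proof. by rewrite addr_ge0 ?mulr_ge0 ?addr_ge0 ?powR_ge0. Qed.

Lemma zeta_bound s : a <= s <= b -> `|zeta s| <= Z0.
Proof.
by move=> sI; apply: norm_le_N0 => //; exact: N0_lt_pinfty (ltW kappa_gt0) zeta_N1.
Qed.

Lemma rt_diag t (xi : R) : a <= t <= b -> 0 <= xi -> rt t t xi = 0.
Proof.
move=> /andP[ta tb] xi0; have tt : a <= t <= t by rewrite ta lexx.
have := yt_increment tt tb xi0.
rewrite subrr mulr0 oppr0 expR0 scale1r x1_diag ?ta// mul0mx trmx0 addr0.
by move/eqP; rewrite addrC -subr_eq subrr eq_sym => /eqP.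
Qed.

Lemma rt_holder t s : a <= s <= t -> t <= b ->
  (L1norm phi (rt t s) <= (Rv * (t - s) `^ (2 * kappa))%:E)%E.
Proof.
move=> stI tb; have [sa st] := andP stI; have [<-|ts] := eqVneq s t.
  rewrite L1norm_eq0 ?lee_fin ?mulr_ge0 ?powR_ge0// => xi xi0.
  by rewrite rt_diag ?sa ?(le_trans st tb).
have [_ rt_fin] := rt_L1 stI tb.
by apply: L1norm_le_tN2 rt_fin rt_tN2 => //; rewrite lt_neqAle ts.
Qed.

Let drift_factor_le t s (xi : R) : s <= t -> a <= s -> 0 <= xi ->
  `|(expR (- (xi * (t - s))) - 1) * expR (- (xi * (s - a)))| <= (1 + xi) * (t - s).
Proof.
move=> st sa xi0.
have decay : `|expR (- (xi * (s - a)))| <= 1.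
  by rewrite ger0_norm ?expR_ge0// expR_le1 oppr_le0 mulr_ge0 ?subr_ge0.
have := @norm_expRN_sub1_le_weight R xi (t - s) 1 xi0; rewrite powRr1 ?subr_ge0//.
move=> /(_ st); rewrite ltr01 lexx => /(_ isT) growth.
by rewrite normrM -[leRHS]mulr1 ler_pM.
Qed.

Let drift_measurable t s : mxmeasurable H (drift t s).
Proof.
apply: mxmeasurableZ; last by case: ht_L1.
apply: measurable_funM; last exact: measurable_expRN_scaled.
by apply: measurable_funB => //; exact: measurable_expRN_scaled.
Qed.

Let drift_weight_measurable (c : R) :
  measurable_fun H (fun xi => c * ((1 + xi) * `|ht xi|)).
Proof. by apply: measurable_funM => //; apply: measurable_L1weight; case: ht_L1. Qed.

Let drift_le t s : a <= s <= t -> forall xi, H xi ->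
  `|drift t s xi| <= (t - s) * ((1 + xi) * `|ht xi|).
Proof.
move=> /andP[sa st] xi xi0 /=.
by rewrite mx_normZ mulrA ler_wpM2r// [leRHS]mulrC drift_factor_le.
Qed.

Let drift_weighted_integral t s : s <= t ->
  weighted_integral phi (fun xi => (t - s) * ((1 + xi) * `|ht xi|)) = ((t - s) * Lh)%:E.
Proof.
move=> st; rewrite EFinM -Lh_E L1normE (weighted_integralZl mphi) ?subr_ge0//.
  by apply: measurable_L1weight; case: ht_L1.
exact: L1weight_ge0.
Qed.

Lemma norm_fdrift_le t s : a <= s <= t -> `|fdrift t s| <= (t - s) * Lh.
Proof.
move=> stI; rewrite -lee_fin -drift_weighted_integral; last by case/andP: stI.
exact: (norm_phint_le mphi (drift_measurable t s) (drift_weight_measurable _)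
  (drift_le stI)).
Qed.

Lemma norm_x1zeta_le t s : a <= s <= t -> t <= b ->
  `|(phint phi (x1 t s) *m zeta s)^T| <= n%:R * X * Z0 * (t - s) `^ gamma.
Proof.
move=> stI tb; have [sa st] := andP stI; rewrite mx_norm_tr.
apply: le_trans (mx_norm_mul (phint phi (x1 t s)) (zeta s)) _.
rewrite -!mulrA ler_wpM2l// (mulrC Z0) mulrA ler_pM ?zeta_bound ?sa ?(le_trans st tb)//.
rewrite -lee_fin; apply: le_trans (x1_holder stI tb).
by apply: norm_phint_le_L1norm; case: (x1_L1 stI tb).
Qed.

Lemma yrem_phint t s : a <= s <= t -> t <= b ->
  yrem t s = phint phi (rem_integrand t s).
Proof.
move=> stI tb; have [sa st] := andP stI; have sb := le_trans st tb.
have sI : a <= s <= b by rewrite sa.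
have tI : a <= t <= b by rewrite (le_trans sa st).
have idrift : phintegrable phi (drift t s).
  apply: (phintegrable_le mphi (drift_measurable t s) (drift_weight_measurable _)
    (drift_le stI)).
  by rewrite drift_weighted_integral ?ltey.
have ix1 := inL1_phintegrable mphi (x1_L1 stI tb).
have iyt := inL1_phintegrable mphi (yt_L1 tI).
have iys := inL1_phintegrable mphi (yt_L1 sI).
have iQ := phintegrable_tr (phintegrable_mulmxr (zeta s) ix1).
have iyy := phintegrableB iyt iys.
have iyyd := phintegrableB iyy idrift.
rewrite /yrem /ypath /fdrift -phint_mulmxr// -phint_tr.
rewrite opprD addrACA subrr add0r -!phintB //.
apply: eq_phint => xi xi0; have saI : a <= a <= s by rewrite lexx sa.
rewrite (yt_increment stI tb xi0) (yt_increment saI sb xi0) yt_init//.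
by apply/matrixP => i j; rewrite !mxE; ring.
Qed.

Let rem_integrand_le t s : a <= s <= t -> t <= b -> forall xi, H xi ->
  `|rem_integrand t s xi| <= rem_weight t s xi.
Proof.
move=> /andP[sa st] tb xi xi0 /=; apply: le_trans (ler_normD _ _) _.
apply: lerD; first exact: L1weight_ge.
have kappa2 : 0 < 2 * kappa <= 1 by rewrite two_kappa_le1 two_kappa_gt0.
have growth := norm_expRN_sub1_le_weight xi0 (_ : 0 <= t - s) kappa2.
rewrite mx_normZ; apply: le_trans (ler_pM _ _ (growth _) (ler_normD _ _)) _ => //.
  by rewrite subr_ge0.
have zx1 : `|(x1 s a xi *m zeta a)^T| <= n%:R * Z0 * `|x1 s a xi|.
  rewrite mx_norm_tr; apply: le_trans (mx_norm_mul (x1 s a xi) (zeta a)) _.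
  by rewrite -!mulrA ler_wpM2l// mulrC ler_wpM2r ?zeta_bound ?lexx ?(ltW ab).
rewrite [(1 + xi) * _]mulrC -[leLHS]mulrA ler_wpM2l ?powR_ge0// mulrDr lerD2r.
by rewrite [leRHS]mulrCA ler_wpM2l ?addr_ge0.
Qed.

Let rem_weight_measurable t s : a <= s <= t -> t <= b ->
  measurable_fun H (rem_weight t s).
Proof.
move=> stI tb; have [sa st] := andP stI; have saI : a <= a <= s by rewrite lexx sa.
have [mrts _] := rt_L1 stI tb; have [mx1 _] := x1_L1 saI (le_trans st tb).
have [mrsa _] := rt_L1 saI (le_trans st tb).
apply: measurable_funD; first exact: measurable_L1weight.
apply: measurable_funM => //; apply: measurable_funD; last exact: measurable_L1weight.
by apply: measurable_funM => //; exact: measurable_L1weight.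
Qed.

Let rem_weighted_integral t s : a <= s <= t -> t <= b ->
  weighted_integral phi (rem_weight t s)
  = (L1norm phi (rt t s) + ((t - s) `^ (2 * kappa))%:E *
       ((n%:R * Z0)%:E * L1norm phi (x1 s a) + L1norm phi (rt s a)))%E.
Proof.
move=> stI tb; have [sa st] := andP stI; have sb := le_trans st tb.
have saI : a <= a <= s by rewrite lexx sa.
have [mrts _] := rt_L1 stI tb; have [mx1 _] := x1_L1 saI sb.
have [mrsa _] := rt_L1 saI sb.
have m1 := measurable_L1weight mrts; have m2 := measurable_L1weight mx1.
have m3 := measurable_L1weight mrsa.
have nZ0 : 0 <= n%:R * Z0 by rewrite mulr_ge0.
have mx1Z := measurable_funM (measurable_cst (n%:R * Z0)) m2.
have px1Z xi : H xi -> 0 <= n%:R * Z0 * ((1 + xi) * `|x1 s a xi|).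
  by move=> xi0; rewrite mulr_ge0 ?L1weight_ge0.
have mu := measurable_funD mx1Z m3.
have pu xi : H xi ->
    0 <= n%:R * Z0 * ((1 + xi) * `|x1 s a xi|) + (1 + xi) * `|rt s a xi|.
  by move=> xi0; rewrite addr_ge0 ?px1Z ?L1weight_ge0.
have d0 : 0 <= (t - s) `^ (2 * kappa) by exact: powR_ge0.
have pdu xi : H xi -> 0 <= (t - s) `^ (2 * kappa) *
    (n%:R * Z0 * ((1 + xi) * `|x1 s a xi|) + (1 + xi) * `|rt s a xi|).
  by move=> xi0; rewrite mulr_ge0 ?pu.
rewrite !L1normE (weighted_integralD mphi m1 (measurable_funM (measurable_cst _) mu)
  (L1weight_ge0 _) pdu) (weighted_integralZl mphi mu pu d0).
by rewrite (weighted_integralD mphi mx1Z m3 px1Z (L1weight_ge0 _))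
  (weighted_integralZl mphi m2 (L1weight_ge0 _) nZ0).
Qed.

Lemma norm_yrem_le t s : a <= s <= t -> t <= b ->
  `|yrem t s| <= Cr * (t - s) `^ (2 * kappa).
Proof.
move=> stI tb; have [sa st] := andP stI; have sb := le_trans st tb.
have saI : a <= a <= s by rewrite lexx sa.
have [mrts _] := rt_L1 stI tb; have [mx1 _] := x1_L1 saI sb.
have [mrsa _] := rt_L1 saI sb.
have mint : mxmeasurable H (rem_integrand t s).
  apply: mxmeasurableD mrts _; apply: mxmeasurableZ.
    by apply: measurable_funB => //; exact: measurable_expRN_scaled.
  apply: mxmeasurableD; last exact: mrsa.
  by apply: mxmeasurable_tr; exact: mxmeasurable_mulmxr.
rewrite yrem_phint // -lee_fin.
apply: le_trans (norm_phint_le mphi mint (rem_weight_measurable stI tb)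
  (rem_integrand_le stI tb)) _.
rewrite rem_weighted_integral //.
have d0 : (0 <= ((t - s) `^ (2 * kappa))%:E)%E by rewrite lee_fin powR_ge0.
have nZ0 : (0 <= (n%:R * Z0)%:E)%E by rewrite lee_fin mulr_ge0.
apply: le_trans (leeD (rt_holder stI tb) (lee_wpmul2l d0
  (leeD (lee_wpmul2l nZ0 (x1_holder saI sb)) (rt_holder saI sb)))) _.
rewrite -!EFinM -!EFinD lee_fin.
have sab p : 0 <= p -> (s - a) `^ p <= (b - a) `^ p.
  by move=> p0; rewrite ge0_ler_powR ?nnegrE ?subr_ge0 ?lerB ?(ltW ab).
have d0' := powR_ge0 (t - s) (2 * kappa).
have := ler_wpM2l (mulr_ge0 d0' (mulr_ge0 (mulr_ge0 (ler0n _ n) Z0_ge0) X_ge0))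
  (sab gamma (ltW gamma_gt0)).
have := ler_wpM2l (mulr_ge0 d0' Rv_ge0) (sab (2 * kappa) (ltW two_kappa_gt0)).
lra.
Qed.

Lemma ypath_increment t s :
  ypath t - ypath s = fdrift t s + (phint phi (x1 t s) *m zeta s)^T + yrem t s.
Proof. by apply/matrixP => i j; rewrite /yrem !mxE; ring. Qed.

Lemma norm_ypath_increment_le t s : a <= s <= t -> t <= b ->
  `|ypath t - ypath s| <= (t - s) * Lh + n%:R * X * Z0 * (t - s) `^ gamma
                          + Cr * (t - s) `^ (2 * kappa).
Proof.
move=> stI tb; rewrite ypath_increment.
apply: le_trans (ler_normD _ _) _; rewrite lerD ?norm_yrem_le//.
by apply: le_trans (ler_normD _ _) _; rewrite lerD ?norm_fdrift_le ?norm_x1zeta_le.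
Qed.

Definition ypath_holder_constant p := Lh * (b - a) `^ (1 - p)
  + n%:R * X * Z0 * (b - a) `^ (gamma - p) + Cr * (b - a) `^ (2 * kappa - p).

Lemma norm_ypath_increment_holder p t s :
  0 <= p <= gamma -> a <= s -> s < t -> t <= b ->
  `|ypath t - ypath s| <= ypath_holder_constant p * (t - s) `^ p.
Proof.
move=> /andP[p0 pg] sa st tb; have stI : a <= s <= t by rewrite sa ltW.
have ts0 : 0 < t - s by rewrite subr_gt0.
apply: le_trans (norm_ypath_increment_le stI tb) _.
have tsba : t - s <= b - a by rewrite lerB.
have split q : p <= q -> (t - s) `^ q <= (t - s) `^ p * (b - a) `^ (q - p).
  by move=> pq; rewrite powR_split ?p0.
have p1 : p <= 1 by rewrite (le_trans pg) ?(le_trans gamma_2kappa).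
have := ler_wpM2l Lh_ge0 (split 1 p1).
have nXZ0 : 0 <= n%:R * X * Z0 by rewrite !mulr_ge0.
have := ler_wpM2l nXZ0 (split gamma pg).
have := ler_wpM2l Cr_ge0 (split (2 * kappa) (le_trans pg gamma_2kappa)).
rewrite powRr1 ?(ltW ts0) /ypath_holder_constant; lra.
Qed.

Lemma ypath_in_A :
  inA phi a b gamma kappa x1 fdrift (a0 + phint phi ht) ypath zeta yrem.
Proof.
split.
- apply: (@le_lt_trans _ _ Lh%:E); last exact: ltey.
  apply: N2_le => // s t sa st tb.
  by rewrite powRr1 ?subr_ge0 ?(ltW st)// [leRHS]mulrC norm_fdrift_le // sa (ltW st).
- apply: (@le_lt_trans _ _ (ypath_holder_constant gamma)%:E); last exact: ltey.
  apply: N1_le => // s t sa st tb.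
  by apply: norm_ypath_increment_holder => //; rewrite lexx ltW.
- by rewrite /ypath (eq_phint _ yt_init).
- split => //; apply: (@le_lt_trans _ _ Cr%:E); last exact: ltey.
  apply: N2_le => // s t sa st tb.
  by apply: norm_yrem_le; rewrite ?sa ?(ltW st).
- by move=> t s _ _; rewrite /yrem [RHS]addrCA subrr addr0.
Qed.

Lemma MA_ypath_le :
  (MA a b kappa ypath zeta yrem
   <= (controlled_constant n X kappa gamma (b - a))%:E *
      (NQ phi a b kappa yt zeta rt + ((b - a) `^ (1 - kappa))%:E * L1norm phi ht))%E.
Proof.
set e := b - a; have [c_ge1 c_Rv c_Z0] := controlled_constant_ge n kappa gamma e X_ge0.
set c := controlled_constant n X kappa gamma e in c_ge1 c_Rv c_Z0 *.
have fin_E (x : \bar R) : (0 <= x)%E -> (x < +oo)%E -> x = (fine x)%:E.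
  by move=> x0 xfin; rewrite fineK// ge0_fin_numE.
have N2yrem : (N2 a b (2 * kappa) yrem <= Cr%:E)%E.
  by apply: N2_le => // s t sa st tb; apply: norm_yrem_le; rewrite ?sa ?(ltW st).
have N1ypath : (N1 a b kappa ypath <= (ypath_holder_constant kappa)%:E)%E.
  apply: N1_le => // s t sa st tb; apply: norm_ypath_increment_holder => //.
  by rewrite ltW ?(ltW kappa_gamma).
have N0_fin := N0_lt_pinfty ab (ltW kappa_gt0) zeta_N1.
rewrite /MA /NQ (fin_E (N0 a b zeta)) ?N0_ge0//.
rewrite (fin_E (N1 a b kappa zeta)) ?N1_ge0//.
rewrite (fin_E (tN2 phi a b (2 * kappa) rt)) ?tN2_ge0// Lh_E.
apply: le_trans (leeD (leeD (lexx _) N2yrem) N1ypath) _.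
apply: (@le_trans _ _ (c * (Z0 + Z1 + Rv + e `^ (1 - kappa) * Lh))%:E); last first.
  rewrite EFinM lee_wpmul2l ?lee_fin ?(le_trans ler01)//.
  rewrite !EFinD EFinM; apply: leeD => //; apply: leeD => //; apply: leeD => //.
  by rewrite leeDr ?tN2_ge0.
rewrite -!EFinD lee_fin /ypath_holder_constant (_ : 2 * kappa - kappa = kappa);
  last by ring.
have := ler_wpM2r Z0_ge0 c_Z0; have := ler_wpM2r Rv_ge0 c_Rv.
have := ler_wpM2r Z1_ge0 c_ge1.
have := ler_wpM2r (mulr_ge0 (powR_ge0 e (1 - kappa)) Lh_ge0) c_ge1.
lra.
Qed.

End integrated_controlled_path.

Lemma tdelta2_diag (R : realType) m n (B : R -> R -> R -> 'M[R]_(m, n)) t xi :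
  tdelta2 B t t t xi = - B t t xi.
Proof. by rewrite /tdelta2 !subrr mulr0 oppr0 expR0 scale1r sub0r. Qed.

Lemma hypH_x1 (R : realType) (phi : R -> R) (T gamma : R) (n : nat)
    (x1 : R -> R -> R -> 'M[R]_(1, n)) (x2 : R -> R -> R -> 'M[R]_(n, n))
    (x3 : R -> R -> R -> R -> 'M[R]_(n, n)) (a b : R) :
  0 < T -> hypH phi T gamma x1 x2 x3 -> 0 <= a -> b <= T ->
  [/\ forall t s, a <= s <= t -> t <= b -> inL1 phi (x1 t s),
      forall t (xi : R), a <= t <= b -> 0 <= xi -> x1 t t xi = 0 &
      forall t s, a <= s <= t -> t <= b ->
        (L1norm phi (x1 t s) <= (fine (tN2 phi 0 T gamma x1) * (t - s) `^ gamma)%:E)%E].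
Proof.
move=> T0 [[[x1_L1 _] x1_fin] _ _ dx1 _] a0 bT.
have sub t s : a <= s <= t -> t <= b -> 0 <= s <= t /\ t <= T.
  by case/andP=> sa st tb; rewrite (le_trans a0 sa) st (le_trans tb bT).
have x1_diag t (xi : R) : a <= t <= b -> 0 <= xi -> x1 t t xi = 0.
  case/andP=> ta tb xi0; have tt : a <= t <= t by rewrite ta lexx.
  have [/andP[t0 _] tT] := sub t t tt tb.
  by apply/eqP; rewrite -oppr_eq0 -tdelta2_diag dx1 ?t0 ?tT ?lexx.
split=> // [t s stI tb|t s stI tb]; have [/andP[s0 st] tT] := sub t s stI tb.
  by apply: x1_L1 => //; rewrite s0.
have [<-|ts] := eqVneq s t.
  rewrite L1norm_eq0 ?lee_fin ?mulr_ge0 ?powR_ge0 ?fine_ge0 ?tN2_ge0// => xi xi0.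
  by rewrite x1_diag // (andP stI).1 (le_trans st tb).
have [_ x1_fin'] := x1_L1 t s (introT andP (conj s0 st)) tT.
by apply: L1norm_le_tN2 x1_fin' x1_fin => //; rewrite lt_neqAle ts.
Qed.

Theorem proposition4p12 (R : realType) (phi : R -> R) (T kappa gamma : R)
  (n : nat) (x1 : R -> R -> R -> 'M[R]_(1, n)) (x2 : R -> R -> R -> 'M[R]_(n, n))
  (x3 : R -> R -> R -> R -> 'M[R]_(n, n)) :
  measurable_fun [set xi : R | 0 < xi] phi ->
  0 < T ->
  1 / 3 < kappa -> kappa < gamma -> gamma < 1 / 2 ->
  hypH phi T gamma x1 x2 x3 ->
  exists c : R, 0 <= c /\
  forall (k : nat) (a b : R) (a0 : 'M[R]_(k, 1)) (ht : R -> 'M[R]_(k, 1))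
    (yt : R -> R -> 'M[R]_(k, 1)) (zeta : R -> 'M[R]_(n, k))
    (rt : R -> R -> R -> 'M[R]_(k, 1)),
    0 <= a -> a < b -> b <= T ->
    inL1 phi ht ->
    inQ phi a b kappa x1 ht yt zeta rt ->
    let y := fun t => a0 + phint phi (yt t) in
    let f := fun t s => phint phi (fun xi =>
               (expR (- (xi * (t - s))) - 1) * expR (- (xi * (s - a))) *: ht xi) in
    let h := a0 + phint phi ht in
    exists (zetay : R -> 'M[R]_(n, k)) (ry : R -> R -> 'M[R]_(k, 1)),
      inA phi a b gamma kappa x1 f h y zetay ry /\
      (MA a b kappa y zetay ry
       <= c%:E * (NQ phi a b kappa yt zeta rt
                  + ((b - a) `^ (1 - kappa))%:E * L1norm phi ht))%E.
Proof.
move=> /measurable_fun_halfline mphi T0 k13 kg g12 hH.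
have [k0 g2k k21] : [/\ 0 < kappa, gamma <= 2 * kappa & 2 * kappa <= 1] by split; lra.
set X := fine (tN2 phi 0 T gamma x1); have X0 : 0 <= X by rewrite fine_ge0 ?tN2_ge0.
exists (controlled_constant n X kappa gamma T).
have TT : 0 <= T <= T by rewrite lexx ltW.
split; first by have /andP[] := controlled_constant_le n X0 k0 kg TT.
move=> k a b a0 ht yt zeta rt a_ge0 ab bT ht_L1 yQ y f h.
have [x1_L1 x1_diag x1_holder] := hypH_x1 T0 hH a_ge0 bT.
exists zeta, (yrem phi a x1 a0 ht yt zeta); split.
  exact: (ypath_in_A a0 mphi ab k0 kg g2k k21 ht_L1 yQ x1_L1 x1_diag X0 x1_holder).
apply: le_trans (MA_ypath_le a0 mphi ab k0 kg g2k k21 ht_L1 yQ x1_L1 x1_diag X0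
  x1_holder) _.
have ebT : 0 <= b - a <= T by rewrite subr_ge0 ltW//= lerBlDr (le_trans bT) ?lerDl.
have /andP[_ cle] := controlled_constant_le n X0 k0 kg ebT.
apply: lee_wpmul2r; last by rewrite lee_fin.
rewrite adde_ge0 ?mule_ge0 ?lee_fin ?powR_ge0 ?L1norm_ge0//.
by rewrite /NQ /tN1 !adde_ge0 ?tN2_ge0 ?N0_ge0 ?N1_ge0.
Qed.
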